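(* The map $\operatorname{sDet}$ defines a strict monoidal functor $\mathcal{C}\to\mathcal{D}$ which is an equivalence of monoidal categories.
   Context: For $i\in\mathbb{N}$ let $V_i\cong\mathbb{C}^2$ with orthonormal basis $v_{i,0},v_{i,1}$; for a finite ordered index list $A$ put $V_A=\bigotimes_{i\in A}V_i$ ($V_\emptyset=\mathbb{C}$). For $I\subseteq A$ let $|I\rangle=\bigotimes_{i\in A}v_{i,\chi(i,I)}$, $\langle I|=\bigotimes_{i\in A}v^*_{i,\chi(i,I)}$, with $\chi(i,I)=1$ if $i\in I$ and $0$ otherwise. For a complex matrix $X$ with rows labeled by $R$ and columns by $S$, $\operatorname{sDet}(X)=\sum_{I\subseteq R,\,J\subseteq S}\det(X_{I,J})|I\rangle\langle J|$ ($X_{I,J}$ the submatrix on rows $I$, columns $J$; $\det$ of the $0\times 0$ matrix is $1$, of non-square matrices $0$); on objects $\operatorname{sDet}(A)=V_A$. $\mathcal{C}$: objects finite ordered subsets of $\mathbb{N}$ (possibly with repetitions), monoidal product union, unit $\emptyset$; morphisms complex matrices with rows and columns labeled by the two objects; composition is matrix product along the common label set; monoidal product of morphisms is direct sum of labeled matrices; associator and unitors are identities. $\mathcal{D}$: the monoidal subcategory of $\mathrm{Vect}_\mathbb{C}$ with objects $V_A$ and morphisms generated by all $\operatorname{sDet}(X)$ under composition (contraction along shared labels) and tensor product. *)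

From HB Require Import structures.
From mathcomp Require Import all_boot all_order all_algebra.
From mathcomp Require Import complex reals.
Set Implicit Arguments. Unset Strict Implicit. Unset Printing Implicit Defensive.
Import Order.TTheory GRing.Theory Num.Theory.
Local Open Scope ring_scope.

(* Objects of C (and labels of the objects V_A of D) are lists A : seq nat
   (finite ordered families of labels, repetitions allowed).  The tensor
   factors / matrix labels of A are its positions 'I_(size A), ordered as in A.
   The monoidal product of objects is concatenation A ++ B, the unit is [::].

   The basis vector |I> of V_A is indexed by a subset I : {set 'I_(size A)}.
   A linear map f : V_A -> V_B is represented by its matrix in these bases,
   f I J = <I| f |J>  (I subset of positions of B, J subset of positions of A). *)

Section Defs.
Variable R : realType.
Local Notation C := (R[i]).

Definition CHom (A B : seq nat) := 'M[C]_(size B, size A).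

Definition Cid (A : seq nat) : CHom A A := 1%:M.
Definition Ccomp (A B D : seq nat) (Y : CHom B D) (X : CHom A B) : CHom A D :=
  Y *m X.
Definition Ctens (A B A' B' : seq nat) (X : CHom A B) (Y : CHom A' B') :
  CHom (A ++ A') (B ++ B') :=
  castmx (esym (size_cat B B'), esym (size_cat A A')) (block_mx X 0 0 Y).

Definition DHom (A B : seq nat) :=
  {set 'I_(size B)} -> {set 'I_(size A)} -> C.

Definition Did (A : seq nat) : DHom A A := fun I J => (I == J)%:R.
Definition Dcomp (A B D : seq nat) (g : DHom B D) (f : DHom A B) : DHom A D :=
  fun I K => \sum_(J : {set 'I_(size B)}) g I J * f J K.

Definition catl (A A' : seq nat) (i : 'I_(size A)) : 'I_(size (A ++ A')) :=
  cast_ord (esym (size_cat A A')) (lshift (size A') i).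
Definition catr (A A' : seq nat) (i : 'I_(size A')) : 'I_(size (A ++ A')) :=
  cast_ord (esym (size_cat A A')) (rshift (size A) i).
Definition splitl (A A' : seq nat) (I : {set 'I_(size (A ++ A'))}) :
  {set 'I_(size A)} := [set i | catl A' i \in I].
Definition splitr (A A' : seq nat) (I : {set 'I_(size (A ++ A'))}) :
  {set 'I_(size A')} := [set i | catr A i \in I].

(* tensor product: V_(A++A') = V_A (x) V_A', |I> = |splitl I> (x) |splitr I> *)
Definition Dtens (A B A' B' : seq nat) (f : DHom A B) (g : DHom A' B') :
  DHom (A ++ A') (B ++ B') :=
  fun I J => f (splitl I) (splitl J) * g (splitr I) (splitr J).

(* det(X_{I,J}): rows I and columns J taken in increasing (label) order;
   0 if the submatrix is not square; the 0x0 determinant is 1. *)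
Definition minor (m n : nat) (X : 'M[C]_(m, n))
    (I : {set 'I_m}) (J : {set 'I_n}) : C :=
  match #|J| =P #|I| with
  | ReflectT e =>
      \det (\matrix_(i < #|I|, j < #|I|)
              X (enum_val i) (enum_val (cast_ord (esym e) j)))
  | ReflectF _ => 0
  end.

Definition sDet (A B : seq nat) (X : CHom A B) : DHom A B :=
  fun I J => minor X I J.

Inductive inD : forall A B : seq nat, DHom A B -> Prop :=
  | inD_sDet A B (X : CHom A B) : inD (sDet X)
  | inD_comp A B D (g : DHom B D) (f : DHom A B) :
      inD g -> inD f -> inD (Dcomp g f)
  | inD_tens A B A' B' (f : DHom A B) (g : DHom A' B') :
      inD f -> inD g -> inD (Dtens f g).

End Defs.

From HB Require Import structures.
From mathcomp Require Import all_boot all_order all_algebra.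
From mathcomp Require Import complex reals.
From mathcomp Require Import fingroup perm.
From mathcomp Require Import boolp.
Set Implicit Arguments. Unset Strict Implicit. Unset Printing Implicit Defensive.
Import Order.TTheory GRing.Theory Num.Theory.
Local Open Scope ring_scope.

(* The (I, J) entry of sDet X is the minor det X_{I,J}, i.e. sDet X is the
   matrix of the exterior power of X in the bases |I>.  Preservation of
   composition is the Cauchy-Binet formula for the minors of a product.  A
   minor of the block-diagonal matrix diag(X, Y) vanishes unless its rows and
   columns split in equal numbers between the two blocks (otherwise some rows
   are supported on fewer columns); when they do, the submatrix is itself block
   diagonal and the minor factors into a minor of X times a minor of Y, which is
   strict monoidality.  The 1x1 minors recover X, so sDet is faithful, and as
   it preserves composition and tensor products, every morphism generated from
   the sDet X is again of this form. *)

Definition enum_cast (T : finType) (A : {set T}) k (e : k = #|A|) (i : 'I_k) : T :=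
  enum_val (cast_ord e i).

Lemma enum_castP (T : finType) (A : {set T}) k (e : k = #|A|) i : enum_cast e i \in A.
Proof. exact: enum_valP. Qed.

Lemma enum_cast_inj (T : finType) (A : {set T}) k (e : k = #|A|) : injective (enum_cast e).
Proof. by move=> i j /enum_val_inj /cast_ord_inj. Qed.

Lemma card_preim_enum_cast (T : finType) (A P : {set T}) k (e : k = #|A|) :
  #|[set i : 'I_k | enum_cast e i \in P]| = #|A :&: P|.
Proof.
rewrite -(card_imset _ (@enum_cast_inj _ A k e)); apply: eq_card => x.
rewrite inE; apply/imsetP/andP => [[i iP ->] | [xA xP]].
  by move: iP; rewrite inE enum_castP.
exists (cast_ord (esym e) (enum_rank_in xA x)); last first.
  by rewrite /enum_cast cast_ordKV enum_rankK_in.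
by rewrite inE /enum_cast cast_ordKV enum_rankK_in.
Qed.

Lemma sorted_enum_val n (A : {set 'I_n}) : sorted ltn [seq val i | i <- enum A].
Proof.
rewrite -[enum _](eq_filter (mem_enum _)) -(eq_filter (mem_map val_inj _)) -filter_map.
by rewrite (sorted_filter ltn_trans) // unlock val_ord_enum iota_ltn_sorted.
Qed.

Lemma card_setI_image (T T' : finType) (f : T -> T') (I : {set T'}) :
  injective f -> #|I :&: [set f a | a : T]| = #|[set a | f a \in I]|.
Proof.
move=> finj; rewrite -(card_imset _ finj); apply: eq_card => x; rewrite inE.
apply/andP/imsetP => [[xI /imsetP [a _ xa]] | [a aI ->]].
  by exists a; rewrite // inE -xa.
by rewrite inE in aI; rewrite aI imset_f.
Qed.

Section CauchyBinet.
Variable R : comPzRingType.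

Lemma det_castmx k l (e : k = l) (M : 'M[R]_k) : \det (castmx (e, e) M) = \det M.
Proof. by case: l / e; rewrite castmx_id. Qed.

Lemma det0_rows_supported k (M : 'M[R]_k) (P Q : {set 'I_k}) : (#|Q| < #|P|)%N ->
  (forall i j, i \in P -> j \notin Q -> M i j = 0) -> \det M = 0.
Proof.
move=> ltQP M0; apply: big1 => s _.
have [i /andP [iP siQ] | sPQ] := pickP [pred i | (i \in P) && (s i \notin Q)].
  by rewrite (bigD1 i) //= M0 // mul0r mulr0.
have : s @: P \subset Q.
  by apply/subsetP => _ /imsetP [x xP ->]; move/negbT: (sPQ x); rewrite /= xP negbK.
by move/subset_leq_card; rewrite card_imset; [rewrite leqNgt ltQP | exact: perm_inj].
Qed.

Lemma det_mulmx_ffun k n (A : 'M[R]_(k, n)) (B : 'M[R]_(n, k)) :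
  \det (A *m B) =
  \sum_(f : {ffun 'I_k -> 'I_n}) \prod_i A i (f i) * \det (rowsub f B).
Proof.
transitivity (\sum_(s : 'S_k) (-1) ^+ s * \sum_(f : {ffun 'I_k -> 'I_n})
                 \prod_i (A i (f i) * B (f i) (s i))).
  apply: eq_bigr => s _; rewrite -(bigA_distr_bigA (fun i j => A i j * B j (s i))).
  by congr (_ * _); apply: eq_bigr => i _; rewrite mxE.
under eq_bigr do rewrite big_distrr; rewrite exchange_big /=.
apply: eq_bigr => f _; rewrite big_distrr; apply: eq_bigr => s _.
rewrite big_split mulrCA; congr (_ * (_ * _)).
by apply: eq_bigr => i _; rewrite mxE.
Qed.

Definition cauchy_binet_term k n (A : 'M[R]_(k, n)) (B : 'M[R]_(n, k))
    (J : {set 'I_n}) : R :=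
  match k =P #|J| with
  | ReflectT e => \det (colsub (enum_cast e) A) * \det (rowsub (enum_cast e) B)
  | ReflectF _ => 0
  end.

Lemma cauchy_binet_termE k n (A : 'M[R]_(k, n)) (B : 'M[R]_(n, k)) (J : {set 'I_n})
    (e : k = #|J|) :
  cauchy_binet_term A B J =
  \det (colsub (enum_cast e) A) * \det (rowsub (enum_cast e) B).
Proof. by rewrite /cauchy_binet_term; case: eqP => // e'; rewrite (eq_irrelevance e e'). Qed.

Lemma cauchy_binet_term0 k n (A : 'M[R]_(k, n)) (B : 'M[R]_(n, k)) (J : {set 'I_n}) :
  k <> #|J| -> cauchy_binet_term A B J = 0.
Proof. by rewrite /cauchy_binet_term; case: eqP. Qed.

(* The injections with image J are exactly the [enum_cast e \o s], [s : 'S_k]. *)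
Lemma sum_inj_with_image k n (A : 'M[R]_(k, n)) (B : 'M[R]_(n, k)) (J : {set 'I_n}) :
  \sum_(f : {ffun 'I_k -> 'I_n} | injectiveb f && (f @: setT == J))
     \prod_i A i (f i) * \det (rowsub f B) = cauchy_binet_term A B J.
Proof.
have [e | neJ] := eqVneq k #|J|; last first.
  rewrite cauchy_binet_term0; last exact/eqP.
  apply: big1 => f /andP [/injectiveP injf /eqP imJ].
  by move: neJ; rewrite -imJ card_imset // cardsT card_ord eqxx.
rewrite (cauchy_binet_termE A B e).
pose h (s : 'S_k) : {ffun 'I_k -> 'I_n} := [ffun i => enum_cast e (s i)].
have h_inj : injective h.
  move=> s t /ffunP hst; apply/permP => i.
  by have := hst i; rewrite !ffunE => /enum_cast_inj.
have hP s : injectiveb (h s) && (h s @: setT == J).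
  have hs_inj : injective (h s).
    by move=> x y; rewrite !ffunE => /enum_cast_inj /perm_inj.
  rewrite (introT (injectiveP _) hs_inj) eqEcard card_imset // cardsT card_ord -e.
  by rewrite leqnn andbT; apply/subsetP => _ /imsetP [x _ ->]; rewrite ffunE enum_castP.
have h_onto (f : {ffun 'I_k -> 'I_n}) : injectiveb f && (f @: setT == J) -> {s | h s = f}.
  case/andP => /injectiveP injf /eqP imJ.
  have fJ i : f i \in J by rewrite -imJ imset_f ?inE.
  pose s0 i : 'I_k := cast_ord (esym e) (enum_rank_in (fJ i) (f i)).
  have s0_inj : injective s0.
    move=> i1 i2 /cast_ord_inj eq12; apply: injf.
    by rewrite -(enum_rankK_in (fJ i1) (fJ i1)) eq12 enum_rankK_in.
  exists (perm s0_inj); apply/ffunP => i.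
  by rewrite ffunE permE /enum_cast cast_ordKV enum_rankK_in.
rewrite (reindex h) /=; last first.
  exists (fun f => odflt 1%g [pick s | h s == f]) => [s _ | f Pf].
    by case: pickP => [t /eqP /h_inj -> // | /(_ s)]; rewrite eqxx.
  case: pickP => [t /eqP // | none]; case: (h_onto f Pf) => s hs.
  by move: (none s); rewrite hs eqxx.
rewrite (eq_bigl predT) => [| s]; last exact: hP.
rewrite big_distrl /=; apply: eq_bigr => s _.
have -> : rowsub (h s) B = row_perm s (rowsub (enum_cast e) B).
  by apply/matrixP => i j; rewrite !mxE ffunE.
rewrite row_permE det_mulmx det_perm mulrCA mulrA; congr (_ * _ * _).
by apply: eq_bigr => i _; rewrite ffunE mxE.
Qed.

Lemma cauchy_binet k n (A : 'M[R]_(k, n)) (B : 'M[R]_(n, k)) :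
  \det (A *m B) = \sum_(J : {set 'I_n}) cauchy_binet_term A B J.
Proof.
rewrite det_mulmx_ffun (bigID (fun f : {ffun 'I_k -> 'I_n} => injectiveb f)) /=.
rewrite [X in _ + X]big1 ?addr0 => [| f /injectivePn [i1 [i2 neq12 f12]]]; last first.
  by rewrite (determinant_alternate neq12) ?mulr0 // => j; rewrite !mxE f12.
rewrite (partition_big (fun f : {ffun 'I_k -> 'I_n} => f @: setT) predT) //=.
by apply: eq_bigr => J _; rewrite sum_inj_with_image.
Qed.

End CauchyBinet.

Section Minors.
Variable R : realType.
Local Notation C := (R[i]).

Lemma minorE m n (X : 'M[C]_(m, n)) (I : {set 'I_m}) (J : {set 'I_n}) k
    (eI : k = #|I|) (eJ : k = #|J|) :
  minor X I J = \det (mxsub (enum_cast eI) (enum_cast eJ) X).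
Proof.
rewrite /minor; case: eqP => [eJI | ]; last by rewrite -eI -eJ.
rewrite -[RHS](det_castmx eI); congr (\det _); apply/matrixP => i j.
rewrite castmxE !mxE /enum_cast cast_ordKV; congr (X _ (enum_val _)); exact: val_inj.
Qed.

Lemma minor_card_neq m n (X : 'M[C]_(m, n)) (I : {set 'I_m}) (J : {set 'I_n}) :
  #|J| <> #|I| -> minor X I J = 0.
Proof. by rewrite /minor; case: eqP. Qed.

Lemma minor_mulmx d b a (Y : 'M[C]_(d, b)) (X : 'M[C]_(b, a))
    (I : {set 'I_d}) (K : {set 'I_a}) :
  minor (Y *m X) I K = \sum_(J : {set 'I_b}) minor Y I J * minor X J K.
Proof.
have [eK | neKI] := eqVneq #|K| #|I|; last first.
  rewrite minor_card_neq; last exact/eqP.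
  symmetry; apply: big1 => J _; have [eJI | neJI] := eqVneq #|J| #|I|.
    by rewrite (minor_card_neq X) ?mulr0 // eJI; apply/eqP.
  by rewrite minor_card_neq ?mul0r //; apply/eqP.
rewrite (minorE _ (erefl #|I|) (esym eK)) mxsub_mul cauchy_binet.
apply: eq_bigr => J _; have [eJ | neJ] := eqVneq #|I| #|J|.
  rewrite (cauchy_binet_termE _ _ eJ) (minorE Y (erefl _) eJ) (minorE X eJ (esym eK)).
  by rewrite -mxsubcr -mxsubrc.
rewrite cauchy_binet_term0; last exact/eqP.
by rewrite minor_card_neq ?mul0r //; apply/eqP; rewrite eq_sym.
Qed.

Lemma minor_eq0_supported m n (X : 'M[C]_(m, n)) (I : {set 'I_m}) (J : {set 'I_n})
    (P : {set 'I_m}) (Q : {set 'I_n}) :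
  (#|J :&: Q| < #|I :&: P|)%N ->
  (forall i j, i \in P -> j \notin Q -> X i j = 0) -> minor X I J = 0.
Proof.
move=> ltQP X0; have [eJI | /eqP] := eqVneq #|J| #|I|; last exact: minor_card_neq.
rewrite (minorE X (erefl #|I|) (esym eJI)).
apply: (det0_rows_supported (P := [set i | enum_cast (erefl #|I|) i \in P])
                            (Q := [set j | enum_cast (esym eJI) j \in Q])).
  by rewrite !card_preim_enum_cast.
by move=> i j; rewrite !inE mxE => iP jQ; apply: X0.
Qed.

Lemma minor_id n (I J : {set 'I_n}) : minor (1%:M : 'M[C]_n) I J = (I == J)%:R.
Proof.
have [<- | neIJ] := eqVneq I J.
  rewrite (minorE _ (erefl #|I|) (erefl #|I|)) -[RHS](det1 C #|I|); congr (\det _).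
  by apply/matrixP => i j; rewrite !mxE (inj_eq (@enum_cast_inj _ _ _ _)).
have [eJI | /eqP neJI] := eqVneq #|J| #|I|; last by rewrite minor_card_neq.
apply: (minor_eq0_supported (P := ~: J) (Q := ~: J)) => [|i j]; last first.
  by rewrite !inE negbK mxE => iJ jJ; case: eqP => // eij; rewrite eij jJ in iJ.
rewrite setICr cards0 card_gt0 -setDE setD_eq0.
by apply: contra neIJ => sIJ; rewrite eqEcard sIJ eJI leqnn.
Qed.

Lemma minor_set1 m n (X : 'M[C]_(m, n)) i j : minor X [set i] [set j] = X i j.
Proof.
rewrite (minorE X (esym (cards1 i)) (esym (cards1 j))) det_mx11 mxE.
by congr (X _ _); apply/set1P; apply: enum_castP.
Qed.

End Minors.

Section SplitPositions.
Variables m1 m2 M : nat.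
Hypothesis eM : M = (m1 + m2)%N.

Definition lpos (i : 'I_m1) : 'I_M := cast_ord (esym eM) (lshift m2 i).
Definition rpos (i : 'I_m2) : 'I_M := cast_ord (esym eM) (rshift m1 i).
Definition lpart (I : {set 'I_M}) : {set 'I_m1} := [set i | lpos i \in I].
Definition rpart (I : {set 'I_M}) : {set 'I_m2} := [set i | rpos i \in I].

Lemma lpos_inj : injective lpos.
Proof. by move=> a b /(congr1 val) /= /val_inj. Qed.

Lemma rpos_inj : injective rpos.
Proof. by move=> a b /(congr1 val) /= /addnI /val_inj. Qed.

Lemma lpos_neq_rpos a b : lpos a != rpos b.
Proof.
by apply/eqP => /(congr1 val) /= eab; move: (ltn_ord a); rewrite eab ltnNge leq_addr.
Qed.

Variant pos_spec (x : 'I_M) : Prop :=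
  | PosL a of x = lpos a
  | PosR b of x = rpos b.

Lemma posP x : pos_spec x.
Proof.
case: (splitP (cast_ord eM x)) => [a | b] eab.
  by apply: (PosL (a := a)); apply: val_inj.
by apply: (PosR (b := b)); apply: val_inj.
Qed.

Lemma enum_split (I : {set 'I_M}) :
  enum I = map lpos (enum (lpart I)) ++ map rpos (enum (rpart I)).
Proof.
have ltr : transitive (relpre (@nat_of_ord M) ltn).
  by move=> y x z; rewrite /relpre; apply: ltn_trans.
apply: (irr_sorted_eq ltr) => [x | | | x]; first exact: ltnn.
- by move: (sorted_enum_val I); rewrite sorted_map.
- rewrite sorted_pairwise // pairwise_cat -!sorted_pairwise //; apply/and3P; split.
  + apply/allrelP => _ _ /mapP [a _ ->] /mapP [b _ ->].
    exact: leq_trans (ltn_ord a) (leq_addr _ _).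
  + by move: (sorted_enum_val (lpart I)); rewrite !sorted_map.
  + move: (sorted_enum_val (rpart I)); rewrite !sorted_map.
    by apply: sub_sorted => a b; rewrite /relpre /= ltn_add2l.
rewrite mem_enum mem_cat; case: (posP x) => [a | b] ->.
  have /negbTE -> : lpos a \notin map rpos (enum (rpart I)).
    by apply/mapP => -[b _ /eqP]; rewrite (negbTE (lpos_neq_rpos _ _)).
  by rewrite (mem_map lpos_inj) mem_enum inE orbF.
have /negbTE -> : rpos b \notin map lpos (enum (lpart I)).
  by apply/mapP => -[a _ /eqP]; rewrite eq_sym (negbTE (lpos_neq_rpos _ _)).
by rewrite (mem_map rpos_inj) mem_enum inE.
Qed.

Lemma card_split (I : {set 'I_M}) : #|I| = (#|lpart I| + #|rpart I|)%N.
Proof. by rewrite !cardE enum_split size_cat !size_map. Qed.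

Lemma enum_val_lpart (I : {set 'I_M}) (x : 'I_#|I|) (j : 'I_#|lpart I|) :
  val x = val j -> enum_val x = lpos (enum_val j).
Proof.
move=> xj; rewrite /enum_val enum_split nth_cat size_map xj -cardE ltn_ord.
rewrite (nth_map (enum_val j)); last by rewrite -cardE ltn_ord.
by rewrite (set_nth_default (enum_default j)) // -cardE ltn_ord.
Qed.

Lemma enum_val_rpart (I : {set 'I_M}) (x : 'I_#|I|) (j : 'I_#|rpart I|) :
  val x = (#|lpart I| + val j)%N -> enum_val x = rpos (enum_val j).
Proof.
move=> xj; rewrite /enum_val enum_split nth_cat size_map xj -cardE ltnNge leq_addr addKn.
rewrite (nth_map (enum_val j)); last by rewrite -cardE ltn_ord.
by rewrite (set_nth_default (enum_default j)) // -cardE ltn_ord.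
Qed.

End SplitPositions.

Section BlockDiagonal.
Variable R : realType.
Local Notation C := (R[i]).
Variables m1 m2 n1 n2 M N : nat.
Hypotheses (eM : M = (m1 + m2)%N) (eN : N = (n1 + n2)%N).
Variables (X : 'M[C]_(m1, n1)) (Y : 'M[C]_(m2, n2)).
Let Z : 'M[C]_(M, N) := castmx (esym eM, esym eN) (block_mx X 0 0 Y).

Lemma Z_ll a b : Z (lpos eM a) (lpos eN b) = X a b.
Proof. by rewrite castmxE /lpos !cast_ordK block_mxEul. Qed.

Lemma Z_lr a b : Z (lpos eM a) (rpos eN b) = 0.
Proof. by rewrite castmxE /lpos /rpos !cast_ordK block_mxEur mxE. Qed.

Lemma Z_rl a b : Z (rpos eM a) (lpos eN b) = 0.
Proof. by rewrite castmxE /lpos /rpos !cast_ordK block_mxEdl mxE. Qed.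

Lemma Z_rr a b : Z (rpos eM a) (rpos eN b) = Y a b.
Proof. by rewrite castmxE /rpos !cast_ordK block_mxEdr. Qed.

Lemma minor_diag_unbalanced (I : {set 'I_M}) (J : {set 'I_N}) :
  #|lpart eM I| != #|lpart eN J| -> minor Z I J = 0.
Proof.
move=> neL; have [eJI | /eqP neJI] := eqVneq #|J| #|I|; last by rewrite minor_card_neq.
have [ltL | ltL | eqL] := ltngtP #|lpart eN J| #|lpart eM I|; last by rewrite eqL eqxx in neL.
  apply: (minor_eq0_supported (P := [set lpos eM a | a : 'I_m1])
                              (Q := [set lpos eN b | b : 'I_n1])).
    by rewrite !card_setI_image //; apply: lpos_inj.
  move=> _ j /imsetP [a _ ->]; case: (posP eN j) => [b -> | b -> _]; last exact: Z_lr.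
  by rewrite imset_f.
have ltR : (#|rpart eN J| < #|rpart eM I|)%N.
  rewrite (card_split eN J) (card_split eM I) in eJI.
  by rewrite -(ltn_add2l #|lpart eN J|) eJI ltn_add2r.
apply: (minor_eq0_supported (P := [set rpos eM a | a : 'I_m2])
                            (Q := [set rpos eN b | b : 'I_n2])).
  by rewrite !card_setI_image //; apply: rpos_inj.
move=> _ j /imsetP [a _ ->]; case: (posP eN j) => [b -> _ | b ->]; first exact: Z_rl.
by rewrite imset_f.
Qed.

Lemma minor_diag_balanced (I : {set 'I_M}) (J : {set 'I_N}) :
    #|lpart eM I| = #|lpart eN J| -> #|rpart eM I| = #|rpart eN J| ->
  minor Z I J =
  minor X (lpart eM I) (lpart eN J) * minor Y (rpart eM I) (rpart eN J).
Proof.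
move=> eL eR.
have eI : (#|lpart eM I| + #|rpart eM I|)%N = #|I| by rewrite -card_split.
have eJ : (#|lpart eM I| + #|rpart eM I|)%N = #|J| by rewrite (card_split eN) eL eR.
rewrite (minorE Z eI eJ) (minorE X (erefl _) eL) (minorE Y (erefl _) eR).
rewrite -[mxsub _ _ Z]submxK.
have -> : dlsubmx (mxsub (enum_cast eI) (enum_cast eJ) Z) = 0.
  apply/matrixP => i j; rewrite !mxE /enum_cast.
  by rewrite (enum_val_rpart (j := i)) // (enum_val_lpart (j := cast_ord eL j)) // Z_rl.
rewrite det_ublock; congr (_ * _); congr (\det _); apply/matrixP => i j; rewrite !mxE /enum_cast.
  rewrite (enum_val_lpart (j := i)) // (enum_val_lpart (j := cast_ord eL j)) //.
  by rewrite Z_ll cast_ord_id.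
rewrite (enum_val_rpart (j := i)) // (enum_val_rpart (j := cast_ord eR j)); last by rewrite /= eL.
by rewrite Z_rr cast_ord_id.
Qed.

Lemma minor_diag (I : {set 'I_M}) (J : {set 'I_N}) :
  minor Z I J =
  minor X (lpart eM I) (lpart eN J) * minor Y (rpart eM I) (rpart eN J).
Proof.
have [eL | neL] := eqVneq #|lpart eM I| #|lpart eN J|; last first.
  by rewrite minor_diag_unbalanced // (minor_card_neq X) ?mul0r //; apply/eqP; rewrite eq_sym.
have [eR | neR] := eqVneq #|rpart eM I| #|rpart eN J|; first exact: minor_diag_balanced.
rewrite (minor_card_neq Y) ?mulr0; last by apply/eqP; rewrite eq_sym.
apply: minor_card_neq => eJI; move: neR.
rewrite (card_split eN J) (card_split eM I) eL in eJI.
by rewrite (addnI eJI) eqxx.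
Qed.

End BlockDiagonal.

Section Functor.
Variable R : realType.

Lemma sDet_id (A : seq nat) : sDet (@Cid R A) = @Did R A.
Proof. by do 2 apply: funext => ?; apply: minor_id. Qed.

Lemma sDet_comp (A B D : seq nat) (Y : CHom R B D) (X : CHom R A B) :
  sDet (Ccomp Y X) = Dcomp (sDet Y) (sDet X).
Proof. by do 2 apply: funext => ?; apply: minor_mulmx. Qed.

Lemma sDet_tens (A B A' B' : seq nat) (X : CHom R A B) (Y : CHom R A' B') :
  sDet (Ctens X Y) = Dtens (sDet X) (sDet Y).
Proof.
do 2 apply: funext => ?.
exact: (minor_diag (size_cat B B') (size_cat A A')).
Qed.

Lemma sDet_inj (A B : seq nat) : injective (@sDet R A B).
Proof.
move=> X Y eXY; apply/matrixP => i j; rewrite -(minor_set1 X) -(minor_set1 Y).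
exact: (congr1 (fun f => f [set i] [set j]) eXY).
Qed.

Lemma sDet_full (A B : seq nat) (f : DHom R A B) : inD f -> exists X, sDet X = f.
Proof.
elim=> {A B f} [A B X | A B D g f _ [Y <-] _ [X <-] | A B A' B' f g _ [X <-] _ [Y <-]].
- by exists X.
- by exists (Ccomp Y X); rewrite sDet_comp.
- by exists (Ctens X Y); rewrite sDet_tens.
Qed.

End Functor.

Theorem mainTheorem3 (R : realType) :
  (forall A : seq nat, sDet (@Cid R A) = @Did R A) /\
  (forall (A B D : seq nat) (Y : CHom R B D) (X : CHom R A B),
      sDet (Ccomp Y X) = Dcomp (sDet Y) (sDet X)) /\
  (* strict monoidal on morphisms *)
  (forall (A B A' B' : seq nat) (X : CHom R A B) (Y : CHom R A' B'),
      sDet (Ctens X Y) = Dtens (sDet X) (sDet Y)) /\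
  (* faithful *)
  (forall (A B : seq nat) (X Y : CHom R A B), sDet X = sDet Y -> X = Y) /\
  (* full *)
  (forall (A B : seq nat) (f : DHom R A B), inD f -> exists X : CHom R A B, sDet X = f).
Proof.
split; first exact: sDet_id.
split; first exact: sDet_comp.
split; first exact: sDet_tens.
split; first by move=> A B; apply: sDet_inj.
exact: sDet_full.
Qed.
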